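(* Let $n\ge m\ge1$, let $X_1,\dots,X_n$ be strings of length $\ell_x$ and $Y_1,\dots,Y_m$ strings of length $\ell_y$ over an alphabet $\Sigma$. Let $\sigma,\rho,\mu\notin\Sigma$ be new symbols, $\kappa_1:=4(\ell_x+\ell_y)$, $\kappa_2:=2\kappa_1+\ell_x$, and $G(S):=\sigma^{\kappa_1}S\rho^{\kappa_1}$. Define $$X:=G(X_1)\,\mu^{\kappa_2}\,G(X_2)\,\mu^{\kappa_2}\cdots\mu^{\kappa_2}\,G(X_n),\qquad Y:=\mu^{n\kappa_2}\,G(Y_1)\,\mu^{\kappa_2}\,G(Y_2)\cdots\mu^{\kappa_2}\,G(Y_m)\,\mu^{n\kappa_2}.$$ Then, with $C:=2n\kappa_2$, $$\min_{\Lambda\in\mathbf\Lambda_{n,m}}\mathrm{cost}(\Lambda)\ \le\ \delta(X,Y)-C\ \le\ \min_{\Lambda\in\mathcal S_{n,m}}\mathrm{cost}(\Lambda).$$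
   Context: For strings $U,V$, $L(U,V)$ is the length of a longest common subsequence and $\delta(U,V):=|U|+|V|-2L(U,V)$. An alignment (w.r.t. $n\ge m$) is a set $\Lambda=\{(i_1,j_1),\dots,(i_k,j_k)\}$ with $0\le k\le m$, $1\le i_1<\dots<i_k\le n$ and $1\le j_1<\dots<j_k\le m$; $\mathbf\Lambda_{n,m}$ is the set of all alignments. A structured alignment is one of the form $\{(\Delta+1,1),\dots,(\Delta+m,m)\}$ with $0\le\Delta\le n-m$; $\mathcal S_{n,m}$ is the set of these. With $\gamma:=\max_{i,j}\delta(X_i,Y_j)$, the cost of $\Lambda=\{(i_1,j_1),\dots,(i_{|\Lambda|},j_{|\Lambda|})\}$ is $\mathrm{cost}(\Lambda):=\sum_{k=1}^{|\Lambda|}\delta(X_{i_k},Y_{j_k})+(m-|\Lambda|)\gamma$ if $|\Lambda|<m$, and $\sum_{k=1}^{m}\delta(X_{i_k},Y_{j_k})+(i_m-i_1-m+1)\gamma$ if $|\Lambda|=m$. *)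

From HB Require Import structures.
From mathcomp Require Import all_boot all_order all_algebra.
Set Implicit Arguments. Unset Strict Implicit. Unset Printing Implicit Defensive.

Definition lcs (T : eqType) (U V : seq T) : nat :=
  \max_(b : (size U).-tuple bool | subseq (mask b U) V) size (mask b U).

Definition delta (T : eqType) (U V : seq T) : nat :=
  size U + size V - 2 * lcs U V.

(* Strings are indexed 0-based: X_1..X_n are Xs 0 .. Xs (n-1), Y_1..Y_m are
   Ys 0 .. Ys (m-1).  Alignment pairs are likewise 0-based. *)

Definition gamma (T : eqType) (n m : nat) (Xs Ys : nat -> seq T) : nat :=
  \max_(i < n) \max_(j < m) delta (Xs i) (Ys j).

Definition alignment (n m : nat) (L : seq (nat * nat)) : bool :=
  all (fun p => (p.1 < n) && (p.2 < m)) L &&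
  sorted (fun p q => (p.1 < q.1) && (p.2 < q.2)) L.

Definition structured (m Delta : nat) : seq (nat * nat) :=
  [seq (Delta + j, j) | j <- iota 0 m].

Definition cost (T : eqType) (n m : nat) (Xs Ys : nat -> seq T)
    (L : seq (nat * nat)) : nat :=
  \sum_(p <- L) delta (Xs p.1) (Ys p.2) +
  (if size L < m then (m - size L) * gamma n m Xs Ys
   else ((last (0, 0) L).1 - (head (0, 0) L).1 + 1 - m) * gamma n m Xs Ys).

Definition ext (S : eqType) : eqType := (S + 'I_3)%type.
Definition sym_sigma (S : eqType) : ext S := inr (@Ordinal 3 0 isT).
Definition sym_rho (S : eqType) : ext S := inr (@Ordinal 3 1 isT).
Definition sym_mu (S : eqType) : ext S := inr (@Ordinal 3 2 isT).

Definition Gpad (S : eqType) (k1 : nat) (s : seq S) : seq (ext S) :=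
  nseq k1 (sym_sigma S) ++ map inl s ++ nseq k1 (sym_rho S).

Definition bigX (S : eqType) (k1 k2 n : nat) (Xs : nat -> seq S) : seq (ext S) :=
  Gpad k1 (Xs 0) ++
  flatten [seq nseq k2 (sym_mu S) ++ Gpad k1 (Xs i) | i <- iota 1 n.-1].

Definition bigY (S : eqType) (k1 k2 n m : nat) (Ys : nat -> seq S) : seq (ext S) :=
  nseq (n * k2) (sym_mu S) ++ Gpad k1 (Ys 0) ++
  flatten [seq nseq k2 (sym_mu S) ++ Gpad k1 (Ys j) | j <- iota 1 m.-1] ++
  nseq (n * k2) (sym_mu S).

From HB Require Import structures.
From mathcomp Require Import all_boot all_order all_algebra zify.
Set Implicit Arguments. Unset Strict Implicit. Unset Printing Implicit Defensive.
Import GRing.Theory Num.Theory.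

(* Prefixing both X and Y by mu^k2 leaves delta unchanged and cuts them into
   blocks: x-blocks mu^k2 G(X_i), and y-blocks mu^(n k2), mu^k2 G(Y_j),
   mu^(n k2).

   Upper bound: for a structured alignment, match x-block Delta + j with the
   y-block of Y_j, all of it but the letters outside an LCS of X_(Delta+j) and
   Y_j, and the mu's of all other x-blocks with the two mu-paddings of Y.

   Lower bound: inside each block the symbols are sorted by the rank
   mu < sigma < Sigma < rho, so every common subsequence can be tagged,
   monotonically in both coordinates, by the x-block and the y-block each symbol
   is matched in. Pair each x-block matching a letter of Sigma with the first
   y-block receiving one of its letters, keeping only the first x-block for each
   such y-block; this gives an alignment. A y-block receiving a letter of an
   x-block whose first y-block lies earlier receives no sigma, unselected
   x-blocks with letters match no mu, and the mu's of the x-blocks between the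
   first and last selected ones fit in the y-blocks between them; counting
   matches block by block then bounds the LCS by the cost of that alignment. *)

Lemma sum_nat_eq (x lo hi : nat) : \sum_(lo <= j < hi) (x == j) = (lo <= x < hi).
Proof.
elim: hi => [|hi IH]; first by rewrite big_geq // ltn0 andbF.
case: (leqP lo hi) => [le_lo_hi|lt_hi_lo]; last first.
  by rewrite big_geq //; case: andP => //= -[]; lia.
rewrite big_nat_recr //= IH ltnS.
by case: (ltngtP x hi) => [lt_x_hi|lt_hi_x|->]; rewrite ?andbT ?andbF ?le_lo_hi ?addn0.
Qed.

Lemma count_sum_nat (T : eqType) (p : pred T) (f : T -> nat) lo hi (s : seq T) :
  {in s, forall e, p e -> lo <= f e < hi} ->
  count p s = \sum_(lo <= j < hi) count (fun e => p e && (f e == j)) s.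
Proof.
elim: s => [|x s IH] f_range /=; first by rewrite big1.
rewrite big_split /= -IH => [|e se]; last by apply: f_range; rewrite inE se orbT.
congr (_ + _); case px: (p x) => /=; last by rewrite big1.
by rewrite sum_nat_eq f_range ?mem_head.
Qed.

Lemma size_count4 (T : Type) (p1 p2 p3 p4 : pred T) (s : seq T) :
  (forall e, p1 e + p2 e + p3 e + p4 e = 1) ->
  size s = count p1 s + count p2 s + count p3 s + count p4 s.
Proof. by move=> part; elim: s => //= x s ->; have := part x; lia. Qed.

Lemma leq_sum_subrange (f : nat -> nat) a b c d : a <= c -> c <= d -> d <= b ->
  \sum_(c <= i < d) f i <= \sum_(a <= i < b) f i.
Proof.
move=> le_ac le_cd le_db.
rewrite (@big_cat_nat _ _ _ c a b) //; last exact: leq_trans le_db.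
by rewrite (@big_cat_nat _ _ _ d c b) //= addnCA leq_addr.
Qed.

Lemma foldr_minn_leq (d x : nat) s : x \in s -> foldr minn d s <= x.
Proof.
elim: s => //= y s IH; rewrite inE => /orP [/eqP ->|/IH]; first exact: geq_minl.
exact: leq_trans (geq_minr _ _).
Qed.

Lemma foldr_minn_mem (d : nat) s :
  s != [::] -> all (fun x => x < d) s -> foldr minn d s \in s.
Proof.
elim: s => //= y s IH _ /andP [lt_yd lt_sd].
case: (eqVneq s [::]) => [-> /=|/IH/(_ lt_sd) min_s].
  by rewrite /minn lt_yd mem_head.
by rewrite /minn; case: ifP; rewrite inE ?eqxx // min_s orbT.
Qed.

Lemma sorted_ltn_last (x : nat) s : sorted ltn (x :: s) -> x + size s <= last x s.
Proof. by elim: s x => [|y s IH] x /=; [rewrite addn0|case/andP => lt_xy /IH; lia]. Qed.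

Lemma sorted_ltn_size_leq (m : nat) s :
  sorted ltn s -> all (fun x => x < m) s -> size s <= m.
Proof.
move=> s_sorted s_lt; rewrite -(size_iota 0 m); apply: uniq_leq_size.
  exact: sorted_uniq ltn_trans ltnn _ s_sorted.
by move=> x /(allP s_lt) lt_xm; rewrite mem_iota.
Qed.

Lemma subseq_map_inj (T1 T2 : eqType) (f : T1 -> T2) (a b : seq T1) :
  injective f -> subseq (map f a) (map f b) -> subseq a b.
Proof.
move=> f_inj; elim: b a => [|y b IH] [|x a] //=.
by rewrite (inj_eq f_inj); case: (x == y) => [/IH|/(IH (x :: a))].
Qed.

Lemma subseq_filter_impl (T : eqType) (P Q : pred T) (s : seq T) :
  subpred P Q -> subseq (filter P s) (filter Q s).
Proof.
move=> PQ; have -> : filter P s = filter P (filter Q s).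
  by rewrite -filter_predI; apply: eq_filter => e /=; case: (boolP (P e)) => // /PQ ->.
exact: filter_subseq.
Qed.

Lemma subseq_nseq (T : eqType) (x : T) a b : a <= b -> subseq (nseq a x) (nseq b x).
Proof. by move=> le_ab; rewrite -(subnKC le_ab) nseqD prefix_subseq. Qed.

Lemma size_flatten_iota_const (T : Type) (g : nat -> seq T) c a k :
  (forall i, a <= i < a + k -> size (g i) = c) -> size (flatten (map g (iota a k))) = k * c.
Proof.
elim: k a => [|k IH] a sz_g //=.
rewrite size_cat sz_g ?IH => [|i lt_i|]; by [lia | apply: sz_g; lia].
Qed.

(** * Longest common subsequences *)

Section LongestCommonSubsequence.
Variable T : eqType.
Implicit Types U V w : seq T.

Lemma common_subseq_leq_lcs w U V :
  subseq w U -> subseq w V -> size w <= lcs U V.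
Proof.
move=> /subseqP [b sz_b ->] wV.
have sz_b' : size b == size U by apply/eqP.
exact: (@leq_bigmax_cond _ (fun b : (size U).-tuple bool => subseq (mask b U) V)
         (fun b => size (mask b U)) (Tuple sz_b')).
Qed.

Lemma lcs_leq_bound B U V :
  (forall w, subseq w U -> subseq w V -> size w <= B) -> lcs U V <= B.
Proof. by move=> le_w; apply/bigmax_leqP => b b_sub; apply: le_w => //; apply: mask_subseq. Qed.

Lemma lcs_attained U V : exists2 w, subseq w U /\ subseq w V & size w = lcs U V.
Proof.
have sz0 : size (nseq (size U) false) == size U by rewrite size_nseq.
have P0 : subseq (mask (nseq (size U) false) U) V by rewrite mask_false sub0seq.
rewrite /lcs; have [|b Pb ->] := @eq_bigmax_cond _
    (fun b : (size U).-tuple bool => subseq (mask b U) V) (fun b => size (mask b U)).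
  by apply/card_gt0P; exists (Tuple sz0); exact: P0.
by exists (mask b U) => //; split => //; apply: mask_subseq.
Qed.

Lemma lcs_leq_sizel U V : lcs U V <= size U.
Proof. by apply: lcs_leq_bound => w /size_subseq. Qed.

Lemma lcs_leq_sizer U V : lcs U V <= size V.
Proof. by apply: lcs_leq_bound => w _ /size_subseq. Qed.

Lemma delta_add_lcs U V : delta U V + 2 * lcs U V = size U + size V.
Proof. by rewrite /delta; have := lcs_leq_sizel U V; have := lcs_leq_sizer U V; lia. Qed.

Lemma lcs_id U : lcs U U = size U.
Proof.
by apply/eqP; rewrite eqn_leq lcs_leq_sizel common_subseq_leq_lcs ?subseq_refl.
Qed.

Lemma lcs_cons c U V : lcs (c :: U) (c :: V) = (lcs U V).+1.
Proof.
apply/eqP; rewrite eqn_leq; apply/andP; split.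
  apply: lcs_leq_bound => -[|a w] //= sU sV.
  case: (a == c) sU sV => sU sV; first exact: common_subseq_leq_lcs.
  exact/leqW/(common_subseq_leq_lcs sU sV).
have [w [sU sV] <-] := lcs_attained U V.
by apply: (@common_subseq_leq_lcs (c :: w)); rewrite /= eqxx.
Qed.

Lemma lcs_nseq_cat c k U V : lcs (nseq k c ++ U) (nseq k c ++ V) = k + lcs U V.
Proof. by elim: k => //= k IH; rewrite lcs_cons IH. Qed.

Lemma leq_lcs_cat U1 V1 U2 V2 : lcs U1 V1 + lcs U2 V2 <= lcs (U1 ++ U2) (V1 ++ V2).
Proof.
have [w1 [sU1 sV1] <-] := lcs_attained U1 V1.
have [w2 [sU2 sV2] <-] := lcs_attained U2 V2.
by rewrite -size_cat; apply: common_subseq_leq_lcs; apply: cat_subseq.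
Qed.

Lemma leq_lcs_flatten (Us Vs : seq (seq T)) : size Us = size Vs ->
  \sum_(k < size Us) lcs (nth [::] Us k) (nth [::] Vs k) <= lcs (flatten Us) (flatten Vs).
Proof.
elim: Us Vs => [|U Us IH] [|V Vs] //= sz; first by rewrite big_ord0.
rewrite big_ord_recl /= (leq_trans _ (leq_lcs_cat _ _ _ _)) // leq_add2l.
by apply: IH; case: sz.
Qed.

End LongestCommonSubsequence.

Lemma leq_lcs_map (T T' : eqType) (f : T -> T') (U V : seq T) :
  lcs U V <= lcs (map f U) (map f V).
Proof.
have [w [sU sV] <-] := lcs_attained U V.
by rewrite -(size_map f); apply: common_subseq_leq_lcs; apply: map_subseq.
Qed.

(** * Block-tagged common subsequences *)

Lemma subseq_cat_split (T : eqType) (w s1 s2 : seq T) : subseq w (s1 ++ s2) ->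
  exists w1 w2, [/\ w = w1 ++ w2, subseq w1 s1 & subseq w2 s2].
Proof.
move=> /subseqP [b sz_b ->].
rewrite -(cat_take_drop (size s1) b) mask_cat; last first.
  by apply: size_takel; rewrite sz_b size_cat leq_addr.
by do 2 eexists; split; [|apply: mask_subseq|apply: mask_subseq].
Qed.

Lemma pairwise_zip (T1 T2 : Type) (r1 : rel T1) (r2 : rel T2) s1 s2 :
  pairwise r1 s1 -> pairwise r2 s2 ->
  pairwise (fun x y => r1 x.1 y.1 && r2 x.2 y.2) (zip s1 s2).
Proof.
elim: s1 s2 => [|a s1 IH] [|b s2] //= /andP [A1 P1] /andP [A2 P2].
rewrite IH // andbT.
elim: s1 s2 A1 A2 {IH P1 P2} => [|c s1 IH] [|d s2] //= /andP [-> A1] /andP [-> A2].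
exact: IH.
Qed.

Lemma mem_zip (T1 T2 : eqType) (s1 : seq T1) (s2 : seq T2) p :
  p \in zip s1 s2 -> (p.1 \in s1) && (p.2 \in s2).
Proof.
elim: s1 s2 => [|a s1 IH] [|b s2] //=; rewrite inE => /orP [/eqP ->|/IH /andP [H1 H2]].
  by rewrite !inE !eqxx.
by rewrite !inE H1 H2 !orbT.
Qed.

Lemma all_zip_eq_snd (T1 T2 : Type) (U : eqType) (s1 : seq (T1 * U)) (s2 : seq (T2 * U)) :
  map snd s1 = map snd s2 -> all (fun p => p.1.2 == p.2.2) (zip s1 s2).
Proof. by elim: s1 s2 => [|a s1 IH] [|b s2] //= [-> /IH ->]; rewrite eqxx. Qed.

Lemma map_fst_filter_zip (T1 T2 : Type) (P : pred T1) (s1 : seq T1) (s2 : seq T2) :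
  size s1 = size s2 -> [seq p.1 | p <- zip s1 s2 & P p.1] = filter P s1.
Proof. by elim: s1 s2 => [|a s1 IH] [|b s2] //= [/IH E]; case: (P a); rewrite /= E. Qed.

Lemma map_snd_filter_zip (T1 T2 : Type) (P : pred T2) (s1 : seq T1) (s2 : seq T2) :
  size s1 = size s2 -> [seq p.2 | p <- zip s1 s2 & P p.2] = filter P s2.
Proof. by elim: s1 s2 => [|a s1 IH] [|b s2] //= [/IH E]; case: (P b); rewrite /= E. Qed.

Section BlockTags.
Variables (T : eqType) (r : rel T).
Hypothesis r_trans : transitive r.

(* A symbol tagged with the index of the block it comes from. *)
Definition tag_le (x y : nat * T) := (x.1 <= y.1) && ((x.1 == y.1) ==> r x.2 y.2).

Definition bitag_le (e f : (nat * nat) * T) :=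
  tag_le (e.1.1, e.2) (f.1.1, f.2) && tag_le (e.1.2, e.2) (f.1.2, f.2).

Lemma subseq_flatten_tagged (ss : seq (seq T)) a w :
  all (sorted r) ss -> subseq w (flatten ss) ->
  exists tw : seq (nat * T), [/\ map snd tw = w, pairwise tag_le tw,
     all (fun x => a <= x.1 < a + size ss) tw &
     forall i, subseq [seq x.2 | x <- tw & x.1 == i] (nth [::] ss (i - a))].
Proof.
elim: ss a w => [|s ss IH] /= a w.
  move=> _ sw; have /eqP -> : w == [::] by rewrite -subseq0.
  by exists [::]; split => // i; apply: sub0seq.
case/andP=> s_sorted ss_sorted /subseq_cat_split [w1 [w2 [-> sw1 sw2]]].
have [tw [<- tw_pw tw_range tw_sub]] := IH a.+1 w2 ss_sorted sw2.
have tw_gt x : x \in tw -> a < x.1 by move=> /(allP tw_range) /andP [].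
exists (map (pair a) w1 ++ tw); split.
- by rewrite map_cat -map_comp map_id.
- rewrite pairwise_cat tw_pw andbT pairwise_map; apply/andP; split.
    apply/allrelP => _ y /mapP [z _ ->] /tw_gt lt_ay.
    by rewrite /tag_le /= (ltnW lt_ay) eq_sym (gtn_eqF lt_ay).
  have : pairwise r w1 by rewrite -sorted_pairwise //; apply: subseq_sorted s_sorted.
  by apply: sub_pairwise => x y /= r_xy; rewrite /tag_le /= leqnn eqxx.
- rewrite all_cat; apply/andP; split.
    by apply/allP => x /mapP [z _ ->]; rewrite /= leqnn addnS ltnS leq_addr.
  by apply: sub_all tw_range => x /andP [/ltnW -> ]; rewrite addnS.
- move=> i; rewrite filter_cat map_cat.
  have tw_i : i <= a -> [seq x <- tw | x.1 == i] = [::].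
    move=> le_ia; apply/eqP; rewrite -size_eq0 size_filter -leqn0 leqNgt -has_count.
    by apply/hasP => -[x /tw_gt lt_ax /eqP eq_xi]; move: le_ia; rewrite -eq_xi leqNgt lt_ax.
  case: (ltngtP i a) => [lt_ia|lt_ai|eq_ia].
  + rewrite tw_i ?(ltnW lt_ia) // cats0 (eq_in_filter (a2 := pred0)) ?filter_pred0 ?sub0seq //.
    by move=> _ /mapP [z _ ->] /=; rewrite gtn_eqF.
  + rewrite (eq_in_filter (a2 := pred0)) ?filter_pred0 /=; last first.
      by move=> _ /mapP [z _ ->] /=; rewrite ltn_eqF.
    by rewrite -[i - a]prednK ?subn_gt0 // -subnS; apply: tw_sub.
  + rewrite tw_i ?eq_ia // cats0 subnn (eq_in_filter (a2 := predT)) ?filter_predT //=.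
      by rewrite -map_comp map_id.
    by move=> _ /mapP [z _ ->] /=; rewrite eqxx.
Qed.

Lemma common_subseq_bitagged (ssx ssy : seq (seq T)) w :
  all (sorted r) ssx -> all (sorted r) ssy ->
  subseq w (flatten ssx) -> subseq w (flatten ssy) ->
  exists t : seq ((nat * nat) * T), [/\ size t = size w,
    pairwise bitag_le t,
    all (fun e => (e.1.1 < size ssx) && (e.1.2 < size ssy)) t,
    forall i, subseq [seq e.2 | e <- t & e.1.1 == i] (nth [::] ssx i) &
    forall j, subseq [seq e.2 | e <- t & e.1.2 == j] (nth [::] ssy j)].
Proof.
move=> ssx_sorted ssy_sorted wx wy.
have [tx [tx_w tx_pw tx_range tx_sub]] := subseq_flatten_tagged 0 ssx_sorted wx.
have [ty [ty_w ty_pw ty_range ty_sub]] := subseq_flatten_tagged 0 ssy_sorted wy.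
have sz : size tx = size ty by rewrite -(size_map snd tx) -(size_map snd ty) tx_w ty_w.
have same_sym : all (fun p => p.1.2 == p.2.2) (zip tx ty).
  by apply: all_zip_eq_snd; rewrite tx_w ty_w.
pose f (p : (nat * T) * (nat * T)) := ((p.1.1, p.2.1), p.1.2).
exists (map f (zip tx ty)); split.
- by rewrite size_map size_zip sz minnn -ty_w size_map.
- rewrite pairwise_map.
  have sub_le : {in (fun p : (nat * T) * (nat * T) => p.1.2 == p.2.2) &,
      subrel (fun x y => tag_le x.1 y.1 && tag_le x.2 y.2) (relpre f bitag_le)}.
    move=> [[a1 a2] [b1 b2]] [[c1 c2] [d1 d2]]; rewrite !unfold_in /=.
    by move=> /eqP E1 /eqP E2; rewrite /bitag_le /f /= E1 E2.
  exact: (sub_in_pairwise sub_le same_sym (pairwise_zip tx_pw ty_pw)).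
- rewrite all_map; apply/allP => p /mem_zip /andP [/(allP tx_range) /andP [_ x_lt]].
  by move=> /(allP ty_range) /andP [_ y_lt]; rewrite /f /= x_lt y_lt.
- move=> i; rewrite filter_map -map_comp.
  by have := tx_sub i; rewrite subn0 -(map_fst_filter_zip (fun x => x.1 == i) sz) -map_comp.
- move=> j; rewrite filter_map -map_comp.
  have := ty_sub j; rewrite subn0 -(map_snd_filter_zip (fun x => x.1 == j) sz) -map_comp.
  congr (subseq _ _); apply/eq_in_map => p; rewrite mem_filter => /andP [_ p_zip].
  by have /eqP := allP same_sym p p_zip.
Qed.

End BlockTags.

(** * Ranked blocks *)

Section Blocks.
Variable S : eqType.

(* Ranks mu < sigma < Sigma < rho, so that every block mu^k2 G(s) is sorted. *)
Definition sym_rank (c : ext S) : nat :=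
  match c with
  | inl _ => 2
  | inr o => match val o with 0 => 1 | 1 => 3 | _ => 0 end
  end.

Definition rank_le : rel (ext S) := fun a b => sym_rank a <= sym_rank b.

Definition block k1 k2 (s : seq S) : seq (ext S) := nseq k2 (sym_mu S) ++ Gpad k1 s.

Lemma rank_le_trans : transitive rank_le.
Proof. by move=> a b c; apply: leq_trans. Qed.

Lemma sym_rank_lt4 (c : ext S) : sym_rank c < 4.
Proof. by case: c => // -[[|[|[|k]]] ?]. Qed.

Lemma count_rank_map_inl (r : nat) (s : seq S) :
  count (fun c : ext S => sym_rank c == r) (map inl s) = (r == 2) * size s.
Proof.
rewrite count_map; case: (eqVneq r 2) => [->|ne].
  by rewrite mul1n (eq_count (a2 := predT)) ?count_predT.
by rewrite mul0n (eq_count (a2 := pred0)) ?count_pred0 // => x /=; rewrite eq_sym (negbTE ne).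
Qed.

Lemma count_rank_block k1 k2 (s : seq S) r :
  count (fun c => sym_rank c == r) (block k1 k2 s) =
  (r == 0) * k2 + (r == 1) * k1 + (r == 2) * size s + (r == 3) * k1.
Proof.
rewrite /block /Gpad !count_cat !count_nseq count_rank_map_inl /=.
by rewrite ![_ == r]eq_sym; lia.
Qed.

Lemma sorted_rank_nseq k (c : ext S) : sorted rank_le (nseq k c).
Proof. by elim: k => //= -[|k] //= ->; rewrite andbT /rank_le. Qed.

Lemma sorted_block k1 k2 (s : seq S) : sorted rank_le (block k1 k2 s).
Proof.
rewrite sorted_pairwise; last exact: rank_le_trans.
rewrite /block /Gpad !pairwise_cat -!sorted_pairwise; try exact: rank_le_trans.
rewrite !sorted_rank_nseq /= andbT.
have -> : sorted rank_le (map inl s).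
  by rewrite sorted_map; elim: s => //= x [|y s] //= ->; rewrite andbT /rank_le /=.
rewrite andbT; apply/and3P; split; apply/allrelP => x y.
- by move=> /nseqP [-> _] _.
- by move=> /nseqP [-> _]; rewrite mem_cat => /orP [/mapP [z _ ->]|/nseqP [-> _]].
- by move=> /mapP [z _ ->] /nseqP [-> _].
Qed.

Lemma size_block k1 k2 (s : seq S) : size (block k1 k2 s) = k2 + 2 * k1 + size s.
Proof. by rewrite /block /Gpad !size_cat !size_nseq size_map; lia. Qed.

Lemma lcs_block k1 k2 (x y : seq S) :
  k2 + 2 * k1 + lcs x y <= lcs (block k1 k2 x) (block k1 k2 y).
Proof.
rewrite /block /Gpad; apply: leq_trans (leq_lcs_cat _ _ _ _); rewrite lcs_id size_nseq.
rewrite -addnA leq_add2l; apply: leq_trans (leq_lcs_cat _ _ _ _).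
rewrite lcs_id size_nseq mul2n -addnn -addnA leq_add2l.
apply: leq_trans (leq_lcs_cat _ _ _ _).
by rewrite lcs_id size_nseq addnC leq_add2r leq_lcs_map.
Qed.

Lemma letters_map_inl (w : seq (ext S)) :
  all (fun c => sym_rank c == 2) w -> exists u, w = map inl u.
Proof.
elim: w => [|[a|o] w IH] /=; first by exists [::].
  by move=> /IH [u ->]; exists (a :: u).
by case: o => -[|[|[|k]]].
Qed.

Lemma subseq_inl_block k1 k2 (s u : seq S) :
  subseq (map inl u) (block k1 k2 s) -> subseq u s.
Proof.
move=> sub_u; apply: (@subseq_map_inj _ (ext S) inl _ _ inl_inj).
have <- : filter (fun c => sym_rank c == 2) (block k1 k2 s) = map inl s.
  rewrite /block /Gpad !filter_cat !filter_nseq /= cats0.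
  by rewrite (eq_in_filter (a2 := predT)) ?filter_predT // => _ /mapP [z _ ->].
by rewrite subseq_filter sub_u andbT; apply/allP => _ /mapP [a _ ->].
Qed.

End Blocks.

(** * Counting the matches of a common subsequence *)

Section MatchCounting.
Variable S : eqType.
Variables (n m lx ly k1 k2 : nat) (Xs Ys : nat -> seq S).
Hypothesis m_gt0 : 0 < m.
Hypothesis size_Xs : forall i, i < n -> size (Xs i) = lx.
Hypothesis size_Ys : forall j, j < m -> size (Ys j) = ly.
Hypothesis k1E : k1 = 4 * (lx + ly).
Hypothesis k2E : k2 = 2 * k1 + lx.

Definition x_blocks := [seq block k1 k2 (Xs i) | i <- iota 0 n].

(* y-blocks 0 and m.+1 are the two mu-paddings; y-block j, 0 < j <= m, holds Y_j. *)
Definition y_blocks := nseq (n * k2) (sym_mu S) ::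
  [seq block k1 k2 (Ys j) | j <- iota 0 m] ++ [:: nseq (n * k2) (sym_mu S)].

Lemma size_x_blocks : size x_blocks = n.
Proof. by rewrite size_map size_iota. Qed.

Lemma size_y_blocks : size y_blocks = m.+2.
Proof. by rewrite /= size_cat size_map size_iota addn1. Qed.

Lemma nth_x_blocks i : i < n -> nth [::] x_blocks i = block k1 k2 (Xs i).
Proof. by move=> lt_in; rewrite (nth_map 0) ?size_iota // nth_iota. Qed.

Lemma nth_y_blocks j : 0 < j <= m -> nth [::] y_blocks j = block k1 k2 (Ys j.-1).
Proof.
case: j => // j /= lt_jm; rewrite nth_cat size_map size_iota lt_jm.
by rewrite (nth_map 0) ?size_iota // nth_iota.
Qed.

Lemma nth_y_blocks_pad j : (j == 0) || (j == m.+1) ->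
  nth [::] y_blocks j = nseq (n * k2) (sym_mu S).
Proof. by case/orP => /eqP -> //=; rewrite nth_cat size_map size_iota ltnn subnn. Qed.

(* A common subsequence of the concatenations of the x- and y-blocks, each
   symbol tagged with the x-block and the y-block it is matched in. *)
Variable t : seq ((nat * nat) * ext S).
Hypothesis t_pairwise : pairwise (bitag_le (@rank_le S)) t.
Hypothesis t_range : all (fun e => (e.1.1 < size x_blocks) && (e.1.2 < size y_blocks)) t.
Hypothesis t_x_blocks : forall i, subseq [seq e.2 | e <- t & e.1.1 == i] (nth [::] x_blocks i).
Hypothesis t_y_blocks : forall j, subseq [seq e.2 | e <- t & e.1.2 == j] (nth [::] y_blocks j).

Definition xblk (e : (nat * nat) * ext S) := e.1.1.
Definition yblk (e : (nat * nat) * ext S) := e.1.2.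
Definition erank (e : (nat * nat) * ext S) := sym_rank e.2.

Definition before e f := [/\ xblk e <= xblk f, xblk e = xblk f -> erank e <= erank f,
  yblk e <= yblk f & yblk e = yblk f -> erank e <= erank f].

Lemma match_order e f : e \in t -> f \in t -> [\/ e = f, before e f | before f e].
Proof.
have bitag_before x y : bitag_le (@rank_le S) x y -> before x y.
  rewrite /bitag_le /tag_le /before /xblk /yblk /erank /=.
  move=> /andP [/andP [le_x eq_x] /andP [le_y eq_y]].
  by split => // E; [move: eq_x | move: eq_y]; rewrite E eqxx.
move=> te tf; rewrite -(nth_index e te) -(nth_index e tf).
have := index_mem e t; have := index_mem f t; rewrite te tf => ltf lte.
case: (ltngtP (index e t) (index f t)) => [lt_ef|lt_fe|->]; last by constructor 1.
- by constructor 2; apply/bitag_before/(pairwiseP e t_pairwise).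
- by constructor 3; apply/bitag_before/(pairwiseP e t_pairwise).
Qed.

Lemma xblk_lt e : e \in t -> xblk e < n.
Proof. by move=> /(allP t_range) /andP []; rewrite size_x_blocks. Qed.

Lemma yblk_lt e : e \in t -> yblk e < m.+2.
Proof. by move=> /(allP t_range) /andP [_]; rewrite size_y_blocks. Qed.

Lemma count_xblk_rank i r : i < n ->
  count (fun e => (xblk e == i) && (erank e == r)) t <=
  count (fun c => sym_rank c == r) (block k1 k2 (Xs i)).
Proof.
move=> lt_in; rewrite -nth_x_blocks //.
apply: leq_trans (leq_count_subseq _ (t_x_blocks i)).
by rewrite count_map count_filter; apply: eq_leq; apply: eq_count => e; rewrite andbC.
Qed.

Lemma count_yblk_rank j r : 0 < j <= m ->
  count (fun e => (yblk e == j) && (erank e == r)) t <=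
  count (fun c => sym_rank c == r) (block k1 k2 (Ys j.-1)).
Proof.
move=> j_in; rewrite -nth_y_blocks //.
apply: leq_trans (leq_count_subseq _ (t_y_blocks j)).
by rewrite count_map count_filter; apply: eq_leq; apply: eq_count => e; rewrite andbC.
Qed.

Lemma yblk_inner e : e \in t -> erank e != 0 -> 0 < yblk e <= m.
Proof.
move=> te rk_e; have := yblk_lt te.
case: (boolP ((yblk e == 0) || (yblk e == m.+1))) => [pad|]; last by lia.
have := leq_count_subseq (fun c => sym_rank c != 0) (t_y_blocks (yblk e)).
rewrite nth_y_blocks_pad // count_nseq mul0n leqNgt -has_count => /negP []; apply/hasP.
by exists e.2 => //; rewrite map_f // mem_filter te andbT; apply: eqxx.
Qed.

Definition has_letter i := has (fun e => (xblk e == i) && (erank e == 2)) t.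

(* Equal to m.+2 when x-block i matches no letter. *)
Definition first_yblk i :=
  foldr minn m.+2 [seq yblk e | e <- t & (xblk e == i) && (erank e == 2)].

Lemma first_yblk_witness i : has_letter i ->
  exists2 f, f \in t & [/\ xblk f = i, erank f = 2 & yblk f = first_yblk i].
Proof.
move=> has_i; rewrite /first_yblk; set s := [seq yblk e | e <- t & _].
have s_ne : s != [::] by rewrite -size_eq0 size_map size_filter -lt0n -has_count.
have s_lt : all (fun x => x < m.+2) s.
  by apply/allP => x /mapP [e]; rewrite mem_filter => /andP [_ /yblk_lt lt_e] ->.
have /mapP [f] := foldr_minn_mem s_ne s_lt.
by rewrite mem_filter => /andP [/andP [/eqP xf /eqP rf] tf] fE; exists f.
Qed.

Lemma first_yblk_leq e : e \in t -> erank e = 2 -> first_yblk (xblk e) <= yblk e.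
Proof.
move=> te re; apply/foldr_minn_leq/mapP; exists e => //.
by rewrite mem_filter eqxx re eqxx.
Qed.

Lemma has_letter_of e : e \in t -> erank e = 2 -> has_letter (xblk e).
Proof. by move=> te re; apply/hasP; exists e; rewrite ?eqxx ?re. Qed.

Lemma first_yblk_inner i : has_letter i -> 0 < first_yblk i <= m.
Proof. by move=> /first_yblk_witness [f tf [_ rf <-]]; apply: yblk_inner; rewrite ?rf. Qed.

Lemma first_yblk_mono i i' : has_letter i -> has_letter i' -> i < i' ->
  first_yblk i <= first_yblk i'.
Proof.
move=> /first_yblk_witness [f tf [xf _ <-]] /first_yblk_witness [f' tf' [xf' _ <-]] lt_ii'.
case: (match_order tf tf') => [ff'|[_ _ le_y _]|[le_x _ _ _]].
- by move: lt_ii'; rewrite -xf -xf' ff' ltnn.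
- by [].
- by move: le_x; rewrite xf xf' leqNgt lt_ii'.
Qed.

Definition selected i := has_letter i &&
  all (fun i0 => ~~ has_letter i0 || (first_yblk i0 != first_yblk i)) (iota 0 i).

Definition mu_matches i := count (fun e => (xblk e == i) && (erank e == 0)) t.

Lemma mu_matches_unselected i : has_letter i -> ~~ selected i -> mu_matches i = 0.
Proof.
move=> has_i; rewrite /selected has_i /= => /allPn [i0]; rewrite mem_iota /= => lt_i0i.
rewrite negb_or !negbK => /andP [has_i0 /eqP same_first].
apply/eqP; rewrite -leqn0 leqNgt -has_count; apply/hasP => -[g tg /andP [/eqP xg /eqP rg]].
have [f0 tf0 [xf0 rf0 yf0]] := first_yblk_witness has_i0.
have [f1 tf1 [xf1 rf1 yf1]] := first_yblk_witness has_i.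
(* The mu [g] precedes the letter [f1] of its own x-block and follows the
   letter [f0] of an earlier x-block, which sits in the same y-block. *)
have le_g_f1 : yblk g <= first_yblk i.
  case: (match_order tg tf1) => [gf1|[_ _ le_y _]|[_ rk_x _ _]].
  - by move: rg; rewrite gf1 rf1.
  - by rewrite -yf1.
  - by move: (rk_x (etrans xf1 (esym xg))); rewrite rf1 rg.
case: (match_order tg tf0) => [gf0|[le_x _ _ _]|[_ _ le_y rk_y]].
- by move: rg; rewrite gf0 rf0.
- by move: le_x; rewrite xg xf0 leqNgt lt_i0i.
- have eq_y : yblk f0 = yblk g by apply/eqP; rewrite eqn_leq le_y yf0 same_first le_g_f1.
  by move: (rk_y eq_y); rewrite rf0 rg.
Qed.

(* A sigma in the y-block of [e] would precede [e], hence follow the first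
   letter of x-block [xblk e], which lies in an earlier y-block. *)
Lemma stray_letter_excludes_sigma e g : e \in t -> erank e = 2 ->
  yblk e != first_yblk (xblk e) -> g \in t -> yblk g = yblk e -> erank g != 1.
Proof.
move=> te re stray tg yg; apply/eqP => rg.
have [f0 tf0 [xf0 rf0 yf0]] := first_yblk_witness (has_letter_of te re).
have lt_f0_e : yblk f0 < yblk e by rewrite yf0 ltn_neqAle eq_sym stray first_yblk_leq.
have le_x : xblk g <= xblk e.
  case: (match_order tg te) => [ge|[le_x _ _ _]|[_ _ _ rk_y]] //.
  - by move: rg; rewrite ge re.
  - by move: (rk_y (esym yg)); rewrite re rg.
case: (match_order tg tf0) => [gf0|[_ _ le_y _]|[le_x' rk_x _ _]].
- by move: rg; rewrite gf0 rf0.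
- by move: le_y; rewrite yg leqNgt lt_f0_e.
- have eq_x : xblk f0 = xblk g by lia.
  by move: (rk_x eq_x); rewrite rf0 rg.
Qed.

Lemma mu_between_first_yblks a1 a2 g : has_letter a1 -> has_letter a2 ->
  g \in t -> erank g = 0 -> a1 < xblk g <= a2 ->
  first_yblk a1 < yblk g <= first_yblk a2.
Proof.
move=> /first_yblk_witness [f1 tf1 [xf1 rf1 <-]] /first_yblk_witness [f2 tf2 [xf2 rf2 <-]].
move=> tg rg /andP [lt_a1 le_a2]; apply/andP; split.
  case: (match_order tg tf1) => [gf1|[le_x _ _ _]|[_ _ le_y rk_y]].
  - by move: rg; rewrite gf1 rf1.
  - by move: le_x; rewrite xf1 leqNgt lt_a1.
  - rewrite ltn_neqAle le_y andbT; apply/eqP => /rk_y.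
    by rewrite rf1 rg.
case: (match_order tg tf2) => [gf2|[_ _ le_y _]|[le_x rk_x _ _]] //.
- by move: rg; rewrite gf2 rf2.
- have eq_x : xblk f2 = xblk g by lia.
  by move: (rk_x eq_x); rewrite rf2 rg.
Qed.

Definition letter_matches i :=
  count (fun e => [&& xblk e == i, erank e == 2 & yblk e == first_yblk i]) t.

Lemma letter_matches_common i : exists2 u : seq S, size u = letter_matches i &
  (i < n -> subseq u (Xs i)) /\ (0 < first_yblk i <= m -> subseq u (Ys (first_yblk i).-1)).
Proof.
pose P e := [&& xblk e == i, erank e == 2 & yblk e == first_yblk i].
have [u wE] : exists u, [seq e.2 | e <- t & P e] = map inl u.
  apply: letters_map_inl; apply/allP => c /mapP [e].
  by rewrite mem_filter => /andP [/and3P [_ re _] _] ->.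
exists u; first by rewrite -(size_map (@inl S 'I_3)) -wE size_map size_filter.
split=> [lt_in|j_in]; apply: (@subseq_inl_block _ k1 k2); rewrite -wE.
- rewrite -nth_x_blocks //; apply: subseq_trans (t_x_blocks i).
  by apply/map_subseq/subseq_filter_impl => e /and3P [].
- rewrite -nth_y_blocks //; apply: subseq_trans (t_y_blocks _).
  by apply/map_subseq/subseq_filter_impl => e /and3P [].
Qed.

Lemma letter_matches_leq i : i < n -> letter_matches i <= lx.
Proof.
move=> lt_in; have [u <- [/(_ lt_in) u_sub _]] := letter_matches_common i.
by rewrite -(size_Xs lt_in) size_subseq.
Qed.

Lemma letter_matches_leq_lcs i : i < n -> has_letter i ->
  letter_matches i <= lcs (Xs i) (Ys (first_yblk i).-1).
Proof.
move=> lt_in has_i; have [u <- [ux uy]] := letter_matches_common i.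
by apply: common_subseq_leq_lcs; [apply: ux | apply/uy/first_yblk_inner].
Qed.

Lemma letter_matches_eq0 i : ~~ has_letter i -> letter_matches i = 0.
Proof.
move=> no_letter; apply/eqP; rewrite -leqn0 leqNgt -has_count.
apply: contra no_letter => /hasP [e te /and3P [xe re _]].
by apply/hasP; exists e; rewrite ?xe.
Qed.

Lemma mu_matches_leq i : i < n -> mu_matches i <= k2.
Proof.
move=> lt_in; apply: leq_trans (count_xblk_rank 0 lt_in) _.
by rewrite count_rank_block /=; lia.
Qed.

Definition frame_matches j :=
  count (fun e => (yblk e == j) && ((erank e == 1) || (erank e == 3))) t.

Definition stray_matches j :=
  count (fun e => [&& yblk e == j, erank e == 2 & yblk e != first_yblk (xblk e)]) t.

Lemma frame_stray_matches_leq j : 0 < j <= m ->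
  frame_matches j + stray_matches j <= 2 * k1.
Proof.
move=> j_in.
pose in_rank r := count (fun e => (yblk e == j) && (erank e == r)) t.
have sigma_leq : in_rank 1 <= k1.
  by apply: leq_trans (count_yblk_rank 1 j_in) _; rewrite count_rank_block /=; lia.
have rho_leq : in_rank 3 <= k1.
  by apply: leq_trans (count_yblk_rank 3 j_in) _; rewrite count_rank_block /=; lia.
have stray_leq : stray_matches j <= ly.
  apply: leq_trans (_ : in_rank 2 <= _); first by apply: sub_count => e /and3P [-> -> _].
  by apply: leq_trans (count_yblk_rank 2 j_in) _; rewrite count_rank_block size_Ys //; lia.
have frameE : frame_matches j = in_rank 1 + in_rank 3.
  rewrite -count_predUI (@eq_count _ (predI _ _) pred0) ?count_pred0 => [|e /=].
    by rewrite addn0; apply: eq_count => e /=; rewrite andb_orr.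
  by case: (erank e) => [|[|[|[|?]]]]; rewrite ?andbF.
rewrite frameE; case: (posnP (stray_matches j)) => [-> | /lt0n_neq0]; first by lia.
rewrite -lt0n -has_count => /hasP [e te /and3P [/eqP ye re stray]].
have -> : in_rank 1 = 0.
  apply/eqP; rewrite -leqn0 leqNgt -has_count; apply/hasP => -[g tg /andP [/eqP yg rg]].
  by move: (stray_letter_excludes_sigma te (eqP re) stray tg (etrans yg (esym ye))); rewrite rg.
by rewrite k1E in stray_leq *; lia.
Qed.

Lemma size_matches_decomp : size t =
  \sum_(0 <= i < n) (mu_matches i + letter_matches i) +
  \sum_(1 <= j < m.+1) (frame_matches j + stray_matches j).
Proof.
pose is_first e := yblk e == first_yblk (xblk e).
have mu_part : count (fun e => erank e == 0) t = \sum_(0 <= i < n) mu_matches i.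
  rewrite (@count_sum_nat _ _ xblk 0 n) => [|e te _]; last exact: xblk_lt.
  by apply: eq_bigr => i _; apply: eq_count => e; rewrite andbC.
have letter_part : count (fun e => (erank e == 2) && is_first e) t =
                   \sum_(0 <= i < n) letter_matches i.
  rewrite (@count_sum_nat _ _ xblk 0 n) => [|e te _]; last exact: xblk_lt.
  apply: eq_bigr => i _; apply: eq_count => e; rewrite /is_first.
  by case: (eqVneq (xblk e) i) => [->|]; rewrite ?andbF ?andbT // andbC andbA.
have frame_part : count (fun e => (erank e == 1) || (erank e == 3)) t =
                  \sum_(1 <= j < m.+1) frame_matches j.
  rewrite (@count_sum_nat _ _ yblk 1 m.+1) => [|e te rk_e]; last first.
    by apply: yblk_inner => //; move: rk_e; case: (erank e) => [|[|[|[|k]]]].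
  by apply: eq_bigr => j _; apply: eq_count => e; rewrite andbC.
have stray_part : count (fun e => (erank e == 2) && ~~ is_first e) t =
                  \sum_(1 <= j < m.+1) stray_matches j.
  rewrite (@count_sum_nat _ _ yblk 1 m.+1) => [|e te /andP [/eqP rk_e _]]; last first.
    by apply: yblk_inner; rewrite ?rk_e.
  by apply: eq_bigr => j _; apply: eq_count => e; rewrite andbC andbA.
rewrite (size_count4 (p1 := fun e => erank e == 0)
  (p2 := fun e => (erank e == 1) || (erank e == 3))
  (p3 := fun e => (erank e == 2) && is_first e)
  (p4 := fun e => (erank e == 2) && ~~ is_first e)); last first.
  move=> e; have := sym_rank_lt4 e.2; rewrite /erank.
  by case: (sym_rank e.2) => [|[|[|[|k]]]] //= _; case: (is_first e).
by rewrite mu_part letter_part frame_part stray_part !big_split /=; lia.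
Qed.

Lemma size_matches_leq :
  size t <= \sum_(0 <= i < n) (mu_matches i + letter_matches i) + 2 * m * k1.
Proof.
rewrite size_matches_decomp leq_add2l.
apply: leq_trans (_ : \sum_(1 <= j < m.+1) (2 * k1) <= _); last first.
  by rewrite sum_nat_const_nat; lia.
rewrite big_nat_cond [X in _ <= X]big_nat_cond; apply: leq_sum => j /andP [j_in _].
by apply: frame_stray_matches_leq; rewrite ltnS in j_in.
Qed.

Definition selected_blocks := [seq i <- iota 0 n | selected i].

Definition induced_alignment := [seq (i, (first_yblk i).-1) | i <- selected_blocks].

Lemma selected_has_letter i : selected i -> has_letter i.
Proof. by case/andP. Qed.

Lemma mem_selected_blocks i : (i \in selected_blocks) = (i < n) && selected i.
Proof. by rewrite mem_filter mem_iota andbC. Qed.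

Lemma first_yblk_strict i i' : selected i -> selected i' -> i < i' ->
  first_yblk i < first_yblk i'.
Proof.
move=> sel_i sel_i' lt_ii'.
have le_first :=
  first_yblk_mono (selected_has_letter sel_i) (selected_has_letter sel_i') lt_ii'.
move: sel_i' => /andP [_ /allP /(_ i)]; rewrite mem_iota /= lt_ii' selected_has_letter //=.
by rewrite ltn_neqAle le_first andbT => /(_ isT).
Qed.

Lemma selected_blocks_pairwise :
  pairwise (fun i i' => (i < i') && ((first_yblk i).-1 < (first_yblk i').-1)) selected_blocks.
Proof.
have : pairwise ltn selected_blocks.
  rewrite -sorted_pairwise; last exact: ltn_trans.
  exact/sorted_filter/iota_ltn_sorted/ltn_trans.
apply: (sub_in_pairwise (P := mem selected_blocks)); last by apply/allP.
move=> i i'; rewrite !mem_selected_blocks => /andP [_ sel_i] /andP [_ sel_i'] /= lt_ii'.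
rewrite lt_ii' /=.
have := first_yblk_strict sel_i sel_i' lt_ii'.
by have := first_yblk_inner (selected_has_letter sel_i); lia.
Qed.

Lemma alignment_induced : alignment n m induced_alignment.
Proof.
apply/andP; split.
  apply/allP => p /mapP [i]; rewrite mem_selected_blocks => /andP [lt_in sel_i] ->.
  by rewrite /= lt_in /=; have := first_yblk_inner (selected_has_letter sel_i); lia.
by apply/pairwise_sorted; rewrite pairwise_map; apply: sub_pairwise selected_blocks_pairwise.
Qed.

Lemma size_selected_blocks_leq : size selected_blocks <= m.
Proof.
rewrite -(size_map (fun i => (first_yblk i).-1)); apply: sorted_ltn_size_leq.
  apply: pairwise_sorted; rewrite pairwise_map.
  by apply: sub_pairwise selected_blocks_pairwise => i i' /andP [].
apply/allP => x /mapP [i]; rewrite mem_selected_blocks => /andP [_ sel_i] ->.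
by have := first_yblk_inner (selected_has_letter sel_i); lia.
Qed.

Lemma gamma_leq : gamma n m Xs Ys <= lx + ly.
Proof.
apply/bigmax_leqP => i _; apply/bigmax_leqP => j _.
by rewrite /delta size_Xs // size_Ys //; lia.
Qed.

Lemma sum_delta_induced :
  \sum_(p <- induced_alignment) delta (Xs p.1) (Ys p.2) =
  \sum_(0 <= i < n) selected i * delta (Xs i) (Ys (first_yblk i).-1).
Proof.
rewrite big_map big_filter big_mkcond /= /index_iota subn0.
by apply: eq_bigr => i _; case: (selected i); rewrite ?mul1n ?mul0n.
Qed.

Definition charge i := 2 * (mu_matches i + letter_matches i) +
  selected i * delta (Xs i) (Ys (first_yblk i).-1).

Definition budget i := 2 * k2 + selected i * (lx + ly).

Lemma charge_deficit_selected i : i < n -> selected i ->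
  charge i + 2 * (k2 - mu_matches i) <= budget i.
Proof.
move=> lt_in sel_i; rewrite /charge /budget sel_i !mul1n.
have has_i := selected_has_letter sel_i.
have := letter_matches_leq_lcs lt_in has_i; have := mu_matches_leq lt_in.
have := delta_add_lcs (Xs i) (Ys (first_yblk i).-1).
by rewrite size_Xs // size_Ys; [lia | have := first_yblk_inner has_i; lia].
Qed.

Lemma charge_deficit_no_letter i : i < n -> ~~ has_letter i ->
  charge i + 2 * (k2 - mu_matches i) <= budget i.
Proof.
move=> lt_in no_i; have /negbTE unsel_i : ~~ selected i by apply: contra no_i; case/andP.
rewrite /charge /budget unsel_i letter_matches_eq0 //.
by have := mu_matches_leq lt_in; lia.
Qed.

Lemma charge_deficit_unselected i : i < n -> has_letter i -> ~~ selected i ->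
  charge i + 4 * k1 <= budget i.
Proof.
move=> lt_in has_i unsel_i; rewrite /charge /budget (negbTE unsel_i).
by rewrite mu_matches_unselected //; have := letter_matches_leq lt_in; lia.
Qed.

Lemma charge_leq_budget i : i < n -> charge i <= budget i.
Proof.
move=> lt_in; case: (boolP (has_letter i)) => [has_i|no_i].
  case: (boolP (selected i)) => [sel_i|unsel_i].
    exact: leq_trans (leq_addr _ _) (charge_deficit_selected lt_in sel_i).
  exact: leq_trans (leq_addr _ _) (charge_deficit_unselected lt_in has_i unsel_i).
exact: leq_trans (leq_addr _ _) (charge_deficit_no_letter lt_in no_i).
Qed.

(* Each unmatched mu of x-block i leaves a slack of 4 k1 / k2 in its budget. *)
Lemma charge_slack i : i < n ->
  k2 * charge i + 4 * k1 * (k2 - mu_matches i) <= k2 * budget i.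
Proof.
move=> lt_in.
have le_k1 : 4 * k1 * (k2 - mu_matches i) <= 2 * k2 * (k2 - mu_matches i).
  by apply: leq_mul; lia.
have deficit2 : charge i + 2 * (k2 - mu_matches i) <= budget i ->
                k2 * charge i + 4 * k1 * (k2 - mu_matches i) <= k2 * budget i.
  by move=> le_i; have := leq_mul (leqnn k2) le_i; rewrite mulnDr; lia.
case: (boolP (has_letter i)) => [has_i|no_i]; last exact/deficit2/charge_deficit_no_letter.
case: (boolP (selected i)) => [sel_i|unsel_i]; first exact/deficit2/charge_deficit_selected.
rewrite mu_matches_unselected // subn0 [4 * k1 * k2]mulnC -mulnDr leq_mul2l.
by rewrite charge_deficit_unselected ?orbT.
Qed.

Lemma sum_charge : \sum_(0 <= i < n) charge i =
  2 * \sum_(0 <= i < n) (mu_matches i + letter_matches i) +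
  \sum_(0 <= i < n) selected i * delta (Xs i) (Ys (first_yblk i).-1).
Proof. by rewrite big_split /= big_distrr. Qed.

Lemma sum_budget :
  \sum_(0 <= i < n) budget i = 2 * n * k2 + size selected_blocks * (lx + ly).
Proof.
have -> : size selected_blocks = \sum_(0 <= i < n) (selected i : nat).
  by rewrite size_filter -sum1_count big_mkcond /index_iota subn0.
by rewrite big_split /= sum_nat_const_nat big_distrl /=; lia.
Qed.

Lemma sum_charge_leq_budget : \sum_(0 <= i < n) charge i <= \sum_(0 <= i < n) budget i.
Proof.
rewrite big_nat_cond [X in _ <= X]big_nat_cond; apply: leq_sum => i /andP [/andP [_ lt_in] _].
exact: charge_leq_budget.
Qed.

(* The mu's matched from x-blocks a1 < i <= a2 all lie in y-blocks
   first_yblk a1 < j <= first_yblk a2, that is among Y_2, ..., Y_m. *)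
Lemma sum_mu_matches_between a1 a2 : selected a1 -> selected a2 ->
  \sum_(a1.+1 <= i < a2.+1) mu_matches i <= m.-1 * k2.
Proof.
move=> /selected_has_letter has1 /selected_has_letter has2.
have := first_yblk_inner has1; have := first_yblk_inner has2 => in2 in1.
pose p e := (erank e == 0) && (a1 < xblk e <= a2).
have -> : \sum_(a1.+1 <= i < a2.+1) mu_matches i = count p t.
  rewrite (@count_sum_nat _ p xblk a1.+1 a2.+1) => [|e _ /andP [_]]; last by rewrite ltnS.
  apply: eq_big_nat => i /andP [lt_a1i le_ia2]; apply: eq_count => e; rewrite /p.
  case: (eqVneq (xblk e) i) => [->|]; rewrite ?andbF // lt_a1i -ltnS le_ia2.
  by rewrite !andbT.
rewrite (@count_sum_nat _ p yblk 2 m.+1) => [|e te /andP [/eqP rg x_in]]; last first.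
  by have := mu_between_first_yblks has1 has2 te rg x_in; lia.
apply: leq_trans (_ : \sum_(2 <= j < m.+1) k2 <= _); last by rewrite sum_nat_const_nat; lia.
rewrite big_nat_cond [X in _ <= X]big_nat_cond; apply: leq_sum => j /andP [/andP [le2j lt_jm] _].
apply: leq_trans (_ : count (fun e => (yblk e == j) && (erank e == 0)) t <= _).
  by apply: sub_count => e /andP [/andP [-> _] ->].
apply: leq_trans (count_yblk_rank 0 _) _; first by apply/andP; split; lia.
by rewrite count_rank_block /=; lia.
Qed.

(* At most (m - 1) k2 of the mu's of the x-blocks strictly after a1 and up to
   [last a1 F] are matched, so at least [gap * k2] of them are not. *)
Lemma full_selection_slack a1 F : selected_blocks = a1 :: F -> size selected_blocks = m ->
  4 * k1 * (last a1 F - a1 + 1 - m) + \sum_(0 <= i < n) charge i <=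
  \sum_(0 <= i < n) budget i.
Proof.
move=> selE sizeE; set gap := last a1 F - a1 + 1 - m.
have [k2_0|k2_gt0] := posnP k2.
  by rewrite (_ : k1 = 0) ?mul0n ?sum_charge_leq_budget //; lia.
have sel_a1 : selected a1.
  by have := mem_head a1 F; rewrite -selE mem_selected_blocks => /andP [].
have [lt_am sel_am] : last a1 F < n /\ selected (last a1 F).
  by have := mem_last a1 F; rewrite -selE mem_selected_blocks => /andP [].
have span : a1 + m.-1 <= last a1 F.
  apply: leq_trans (sorted_ltn_last _) => //.
    by move: sizeE; rewrite selE /=; lia.
  rewrite -selE; exact/sorted_filter/iota_ltn_sorted/ltn_trans.
have gap_mu : gap * k2 <= \sum_(a1.+1 <= i < (last a1 F).+1) (k2 - mu_matches i).
  have mu_split : \sum_(a1.+1 <= i < (last a1 F).+1) (k2 - mu_matches i) +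
      \sum_(a1.+1 <= i < (last a1 F).+1) mu_matches i = (last a1 F - a1) * k2.
    rewrite -big_split /= (eq_big_nat _ _ (F2 := fun _ => k2)) ?sum_nat_const_nat.
      by congr (_ * _); lia.
    move=> i /andP [_ le_i]; apply/subnK/mu_matches_leq/(leq_trans le_i lt_am).
  have := sum_mu_matches_between sel_a1 sel_am.
  have : gap * k2 + m.-1 * k2 <= (last a1 F - a1) * k2 by rewrite -mulnDl leq_mul2r; lia.
  lia.
rewrite -(leq_pmul2l k2_gt0) mulnDr.
apply: leq_trans (_ : \sum_(0 <= i < n) (4 * k1 * (k2 - mu_matches i)) +
                     k2 * \sum_(0 <= i < n) charge i <= _).
  rewrite leq_add2r -big_distrr /= mulnCA leq_mul2l; apply/orP; right; rewrite mulnC.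
  apply: leq_trans gap_mu (leq_sum_subrange _ (leq0n _) _ lt_am).
  by rewrite ltnS (leq_trans (leq_addr _ _) span).
rewrite !big_distrr -big_split /=.
rewrite big_nat_cond [X in _ <= X]big_nat_cond; apply: leq_sum => i /andP [/andP [_ lt_in] _].
by rewrite addnC charge_slack.
Qed.

Lemma cost_induced_leq :
  2 * \sum_(0 <= i < n) (mu_matches i + letter_matches i) +
  cost n m Xs Ys induced_alignment <= 2 * n * k2 + m * (lx + ly).
Proof.
have := sum_charge_leq_budget; rewrite sum_charge sum_budget => sum_le.
rewrite /cost sum_delta_induced size_map.
have le_sel := size_selected_blocks_leq.
case: ltnP => [lt_sel|ge_sel].
  set k := size selected_blocks in sum_le le_sel lt_sel *.
  have : (m - k) * gamma n m Xs Ys <= (m - k) * (lx + ly) by rewrite leq_mul2l gamma_leq orbT.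
  have : m * (lx + ly) = k * (lx + ly) + (m - k) * (lx + ly) by rewrite -mulnDl subnKC // ltnW.
  lia.
have sizeE : size selected_blocks = m by apply/eqP; rewrite eqn_leq le_sel ge_sel.
case selE: selected_blocks => [|a1 F]; first by move: sizeE; rewrite selE /=; lia.
have := full_selection_slack selE sizeE; rewrite sum_charge sum_budget sizeE.
rewrite /induced_alignment selE /= last_map /= => slack.
set gap := last a1 F - a1 + 1 - m in slack *.
have : gap * gamma n m Xs Ys <= 4 * k1 * gap.
  by rewrite [4 * k1 * gap]mulnC leq_mul2l (leq_trans gamma_leq) ?orbT // k1E; lia.
lia.
Qed.

Theorem exists_alignment_below : exists2 L, alignment n m L &
  2 * size t + cost n m Xs Ys L <= 2 * n * k2 + m * (k2 + 2 * k1 + ly).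
Proof.
exists induced_alignment; first exact: alignment_induced.
by have := size_matches_leq; have := cost_induced_leq; rewrite k2E; lia.
Qed.

End MatchCounting.

(** * The embedding into a single pair of strings *)

Lemma cost_structured (T : eqType) n m (Xs Ys : nat -> seq T) Delta : 0 < m ->
  cost n m Xs Ys (structured m Delta) = \sum_(j < m) delta (Xs (Delta + j)) (Ys j).
Proof.
case: m => // m _; rewrite /cost /structured size_map size_iota ltnn.
rewrite -addn1 iotaD map_cat /= last_cat /= add0n.
have -> : head (0, 0) ([seq (Delta + j, j) | j <- iota 0 m] ++ [:: (Delta + m, m)]) = (Delta, 0).
  by case: m => [|m] /=; rewrite ?addn0.
rewrite /= (_ : Delta + m - Delta + 1 - (m + 1) = 0) ?mul0n ?addn0; last by lia.
rewrite big_cat big_map big_seq1 addn1 big_ord_recr /=; congr (_ + _).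
by rewrite -(big_mkord xpredT (fun j => delta (Xs (Delta + j)) (Ys j))) /index_iota subn0.
Qed.

Lemma subseq_nseq_blocks (S : eqType) k1 k2 (Xs : nat -> seq S) a k :
  subseq (nseq (k * k2) (sym_mu S)) (flatten [seq block k1 k2 (Xs i) | i <- iota a k]).
Proof.
elim: k a => [|k IH] a //=.
rewrite mulSn nseqD /block -catA; apply: cat_subseq => //.
exact: subseq_trans (IH a.+1) (suffix_subseq _ _).
Qed.

Section Embedding.
Variable S : eqType.
Variables (n m lx ly : nat) (Xs Ys : nat -> seq S).
Hypothesis m_gt0 : 0 < m.
Hypothesis m_le_n : m <= n.
Hypothesis size_Xs : forall i, i < n -> size (Xs i) = lx.
Hypothesis size_Ys : forall j, j < m -> size (Ys j) = ly.
Let k1 := 4 * (lx + ly).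
Let k2 := 2 * k1 + lx.
Let FX := flatten (x_blocks n k1 k2 Xs).
Let FY := flatten (y_blocks n m k1 k2 Ys).

Lemma flatten_x_blocks : FX = nseq k2 (sym_mu S) ++ bigX k1 k2 n Xs.
Proof.
rewrite /FX /x_blocks /bigX; case: n m_le_n m_gt0 => [|n'] //; first by case: m.
by move=> _ _; rewrite /= /block catA.
Qed.

Lemma flatten_y_blocks : FY = nseq k2 (sym_mu S) ++ bigY k1 k2 n m Ys.
Proof.
rewrite /FY /y_blocks /bigY /=; case: m m_gt0 => [|m'] // _.
rewrite /= flatten_cat /= cats0 /block.
by rewrite !catA -nseqD addnC nseqD -!catA.
Qed.

Lemma delta_flatten_blocks : delta (bigX k1 k2 n Xs) (bigY k1 k2 n m Ys) = delta FX FY.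
Proof.
rewrite flatten_x_blocks flatten_y_blocks /delta lcs_nseq_cat !size_cat !size_nseq.
by lia.
Qed.

Lemma size_FX : size FX = n * (2 * k2).
Proof.
rewrite /FX (@size_flatten_iota_const _ _ (k2 + 2 * k1 + lx)) => [|i /andP [_ lt_in]].
  by rewrite /k2; lia.
by rewrite size_block size_Xs.
Qed.

Lemma size_FY : size FY = 2 * n * k2 + m * (k2 + 2 * k1 + ly).
Proof.
rewrite /FY /y_blocks /= flatten_cat /= cats0 !size_cat !size_nseq.
rewrite (@size_flatten_iota_const _ _ (k2 + 2 * k1 + ly)) => [|j /andP [_ lt_jm]]; first lia.
by rewrite size_block size_Ys.
Qed.

Lemma delta_flatten_lower : exists2 L, alignment n m L &
  cost n m Xs Ys L + 2 * n * k2 <= delta FX FY.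
Proof.
have [w [wx wy] size_w] := lcs_attained FX FY.
have sorted_x : all (sorted (@rank_le S)) (x_blocks n k1 k2 Xs).
  by apply/allP => _ /mapP [i _ ->]; apply: sorted_block.
have sorted_y : all (sorted (@rank_le S)) (y_blocks n m k1 k2 Ys).
  rewrite /y_blocks /= all_cat /= sorted_rank_nseq andbT /= andbT.
  by apply/allP => _ /mapP [j _ ->]; apply: sorted_block.
have [t [size_t t_pw t_range t_x t_y]] :=
  common_subseq_bitagged (@rank_le_trans S) sorted_x sorted_y wx wy.
have [L L_align L_cost] :=
  exists_alignment_below m_gt0 size_Xs size_Ys (erefl k1) (erefl k2) t_pw t_range t_x t_y.
exists L => //.
by move: L_cost; rewrite /delta size_FX size_FY -size_w -size_t; lia.
Qed.

Lemma lcs_flatten_structured Delta : Delta <= n - m ->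
  n * k2 + 2 * m * k1 + \sum_(j < m) lcs (Xs (Delta + j)) (Ys j) <= lcs FX FY.
Proof.
move=> le_Delta.
have iotaE : iota 0 n = iota 0 Delta ++ iota Delta m ++ iota (Delta + m) (n - Delta - m).
  by rewrite -!iotaD; congr iota; lia.
rewrite /FX /x_blocks iotaE !map_cat !flatten_cat /FY /y_blocks /= flatten_cat /= cats0.
have mu_lcs a k : k <= n ->
    k * k2 <= lcs (flatten [seq block k1 k2 (Xs i) | i <- iota a k]) (nseq (n * k2) (sym_mu S)).
  move=> le_kn; rewrite -(size_nseq (k * k2) (sym_mu S)).
  apply: common_subseq_leq_lcs; first exact: subseq_nseq_blocks.
  by rewrite subseq_nseq // leq_mul2r le_kn orbT.
have blocks_lcs : m * (k2 + 2 * k1) + \sum_(j < m) lcs (Xs (Delta + j)) (Ys j) <=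
    lcs (flatten [seq block k1 k2 (Xs i) | i <- iota Delta m])
        (flatten [seq block k1 k2 (Ys j) | j <- iota 0 m]).
  apply: leq_trans (leq_lcs_flatten _); last by rewrite !size_map !size_iota.
  rewrite size_map size_iota -[m in m * _]card_ord -sum_nat_const -big_split /=.
  apply: leq_sum => j _; rewrite !(nth_map 0) ?size_iota // !nth_iota // add0n.
  exact: lcs_block.
have nE : n * k2 = Delta * k2 + m * k2 + (n - Delta - m) * k2.
  by rewrite -!mulnDl; congr (_ * _); lia.
apply: leq_trans _ (leq_lcs_cat _ _ _ _).
apply: leq_trans _ (leq_add (mu_lcs 0 Delta _) (leq_lcs_cat _ _ _ _)); last by lia.
apply: leq_trans _
  (leq_add (leqnn _) (leq_add blocks_lcs (mu_lcs (Delta + m) (n - Delta - m) _))).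
  (* The two sums agree only up to conversion, which lia does not see. *)
  rewrite nE mulnDr mulnCA -mulnA; set s := \sum_(j < m) _; clearbody s; lia.
by lia.
Qed.

Lemma delta_flatten_upper Delta : Delta <= n - m ->
  delta FX FY <= cost n m Xs Ys (structured m Delta) + 2 * n * k2.
Proof.
move=> le_Delta; have lcs_le := lcs_flatten_structured le_Delta.
have sum_deltaE : \sum_(j < m) delta (Xs (Delta + j)) (Ys j) +
    2 * \sum_(j < m) lcs (Xs (Delta + j)) (Ys j) = m * (lx + ly).
  rewrite big_distrr -big_split /= (eq_bigr (fun _ => lx + ly)) ?sum_nat_const ?card_ord //.
  by move=> j _; have lt_jm := ltn_ord j; rewrite delta_add_lcs size_Xs ?size_Ys //; lia.
rewrite cost_structured // /delta size_FX size_FY.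
move: lcs_le sum_deltaE; rewrite /k2 /k1.
by set sd := \sum_(j < m) delta _ _; set sl := \sum_(j < m) lcs _ _; clearbody sd sl; lia.
Qed.
End Embedding.

Theorem mainTheorem7 (Sigma : eqType) (n m lx ly : nat)
    (Xs Ys : nat -> seq Sigma) :
  1 <= m -> m <= n ->
  (forall i, i < n -> size (Xs i) = lx) ->
  (forall j, j < m -> size (Ys j) = ly) ->
  let k1 := 4 * (lx + ly) in
  let k2 := 2 * k1 + lx in
  let C := 2 * n * k2 in
  let D := ((delta (bigX k1 k2 n Xs) (bigY k1 k2 n m Ys))%:Z - (C%:Z))%R in
  (exists2 L, alignment n m L & ((cost n m Xs Ys L)%:Z <= D)%R) /\
  (forall Delta, Delta <= n - m -> (D <= (cost n m Xs Ys (structured m Delta))%:Z)%R).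
Proof.
move=> m_gt0 m_le_n size_Xs size_Ys k1 k2 C D.
rewrite /D (delta_flatten_blocks lx ly Xs Ys m_gt0 m_le_n); split.
  have [L L_align L_cost] := delta_flatten_lower m_gt0 m_le_n size_Xs size_Ys.
  by exists L; rewrite // lerBrDr -PoszD lez_nat.
move=> Delta le_Delta.
by rewrite lerBlDr -PoszD lez_nat delta_flatten_upper.
Qed.
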